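(* Let $X$ be a topological space and $g,h:X\to\overline{\mathbb R}$. Then the following are equivalent: (i) $(g,h)$ is a stable pair of Hahn; (ii) $(g,h)$ is a countable pair of Hahn and $g$ and $h$ are functions of the first stable Baire class. Moreover, if $X$ is normal, then (i) and (ii) are also equivalent to each of: (iii) $(g,h)$ is a pair of Hahn and $g$ and $h$ are functions of the first stable Baire class; (iv) $(g,h)$ is a pair of Hahn and $g$ and $h$ are $\sigma$-continuous.
   Context: $\overline{\mathbb R}=[-\infty,+\infty]$ with the order topology. A pair $(g,h)$ is a pair of Hahn if $g\le h$, $g$ is upper semicontinuous and $h$ is lower semicontinuous. It is a countable pair of Hahn if there are continuous $g_n,h_n:X\to\overline{\mathbb R}$ with $g(x)=\inf_n g_n(x)\le\sup_n h_n(x)=h(x)$ for all $x$. It is a stable pair of Hahn if there are continuous $u_n:X\to\overline{\mathbb R}$ with $g(x)=\min_{n\in\mathbb N}u_n(x)$ and $h(x)=\max_{n\in\mathbb N}u_n(x)$ for all $x\in X$ (attained). A sequence $f_n:X\to Z$ converges stably to $f$ if for every $x\in X$ there is $n$ with $f_k(x)=f(x)$ for all $k\ge n$; $f$ is of the first stable Baire class if it is the stable limit of a sequence of continuous functions $X\to\overline{\mathbb R}$. A function $f:X\to\overline{\mathbb R}$ is $\sigma$-continuous if there is a sequence of closed sets $X_n\subseteq X$ with $X=\bigcup_n X_n$ and $f|_{X_n}$ continuous for each $n$. *)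

From HB Require Import structures.
From mathcomp Require Import all_boot all_order all_algebra.
From mathcomp Require Import all_classical all_reals all_analysis.
Set Implicit Arguments. Unset Strict Implicit. Unset Printing Implicit Defensive.
Import Order.TTheory GRing.Theory Num.Theory.
Local Open Scope classical_set_scope.
Local Open Scope ring_scope.
Local Open Scope ereal_scope.

Section HahnDefs.
Context {X : topologicalType} {R : realType}.
Implicit Types f g h : X -> \bar R.

Definition upper_semicontinuous f := forall x (a : R), f x < a%:E ->
  exists2 V, nbhs x V & forall y, V y -> f y < a%:E.

Definition hahn_pair g h :=
  (forall x, g x <= h x) /\ upper_semicontinuous g /\ lower_semicontinuous h.

Definition countable_hahn_pair g h :=
  exists (gn hn : nat -> X -> \bar R),
    (forall n, continuous (gn n)) /\ (forall n, continuous (hn n)) /\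
    forall x, g x = ereal_inf (range (fun n => gn n x)) /\
              g x <= h x /\
              h x = ereal_sup (range (fun n => hn n x)).

Definition stable_hahn_pair g h :=
  exists u : nat -> X -> \bar R,
    (forall n, continuous (u n)) /\
    forall x, ((exists n, u n x = g x) /\ (forall n, g x <= u n x)) /\
              ((exists n, u n x = h x) /\ (forall n, u n x <= h x)).

Definition stably_converges (fn : nat -> X -> \bar R) f :=
  forall x, exists n, forall k, (n <= k)%N -> fn k x = f x.

Definition first_stable_baire f :=
  exists fn : nat -> X -> \bar R,
    (forall n, continuous (fn n)) /\ stably_converges fn f.

Definition sigma_continuous f :=
  exists Xn : nat -> set X,
    (forall n, closed (Xn n)) /\ \bigcup_n Xn n = setT /\
    (forall n, {within Xn n, continuous f}).

End HahnDefs.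

From HB Require Import structures.
From mathcomp Require Import all_boot all_order all_algebra.
From mathcomp Require Import all_classical all_reals all_analysis.
From mathcomp Require Import lra.
Set Implicit Arguments. Unset Strict Implicit. Unset Printing Implicit Defensive.
Import Order.TTheory GRing.Theory Num.Theory.
Import numFieldNormedType.Exports.
Local Open Scope classical_set_scope.
Local Open Scope ring_scope.

(** The running minima and maxima of the [u_n] of a stable pair converge
   stably, since the extrema are attained.  Conversely, a function of the
   first stable Baire class is continuous on each of the closed sets where its
   approximating sequence is constant from the [n]-th term on, so it is
   sigma-continuous.  In a normal space, the Katetov-Tong insertion theorem,
   applied to [g] and to the function equal to [g] on such a closed piece and
   to [h] elsewhere (which is still lower semicontinuous), gives a continuous
   [u] between [g] and [h] that equals [g] on that piece; symmetrically for
   [h].  Together these [u] form a stable pair.  Without normality, (ii) only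
   involves countably many continuous functions, and the coarser topology they
   generate is pseudometrizable, hence normal, and (ii) still holds for it. *)

Section ereal_continuity.
Context {R : realType} {X : topologicalType}.
Local Open Scope ereal_scope.
Implicit Types f g : X -> \bar R.

Lemma continuous_mine f g : continuous f -> continuous g ->
  continuous (fun x => mine (f x) (g x)).
Proof.
move=> cf cg x; apply: (@continuous_comp _ _ _ (fun x => (f x, g x))
  (fun xy : \bar R * \bar R => mine xy.1 xy.2)); last exact: min_continuous.
exact: (cvg_pair (cf x) (cg x)).
Qed.

Lemma continuous_maxe f g : continuous f -> continuous g ->
  continuous (fun x => maxe (f x) (g x)).
Proof.
move=> cf cg x; apply: (@continuous_comp _ _ _ (fun x => (f x, g x))
  (fun xy : \bar R * \bar R => maxe xy.1 xy.2)); last exact: max_continuous.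
exact: (cvg_pair (cf x) (cg x)).
Qed.

Lemma continuous_bigmine (I : Type) (r : seq I) (P : pred I)
    (F : I -> X -> \bar R) : (forall i, continuous (F i)) ->
  continuous (fun x => \big[mine/+oo]_(i <- r | P i) F i x).
Proof.
move=> cF; elim: r => [|i r IH].
  by under eq_fun do rewrite big_nil; exact: cst_continuous.
under eq_fun do rewrite big_cons.
by case: (P i) => //; exact: continuous_mine.
Qed.

Lemma continuous_bigmaxe (I : Type) (r : seq I) (P : pred I)
    (F : I -> X -> \bar R) : (forall i, continuous (F i)) ->
  continuous (fun x => \big[maxe/-oo]_(i <- r | P i) F i x).
Proof.
move=> cF; elim: r => [|i r IH].
  by under eq_fun do rewrite big_nil; exact: cst_continuous.
under eq_fun do rewrite big_cons.
by case: (P i) => //; exact: continuous_maxe.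
Qed.

Lemma nbhs_lt_continuous f x a : continuous f -> f x < a ->
  \forall y \near x, f y < a.
Proof.
move=> cf fxa; apply: (cf x [set y | y < a]).
by apply: open_nbhs_nbhs; split => //; exact: open_ereal_lt_ereal.
Qed.

Lemma nbhs_gt_continuous f x a : continuous f -> a < f x ->
  \forall y \near x, a < f y.
Proof.
move=> cf fxa; apply: (cf x [set y | a < y]).
by apply: open_nbhs_nbhs; split => //; exact: open_ereal_gt_ereal.
Qed.

Lemma closed_eq_continuous f g : continuous f -> continuous g ->
  closed [set x | f x = g x].
Proof.
move=> cf cg x clx; apply: ereal_hausdorff => A B nA nB.
have [|y [/= fgy [Ay By]]] := clx (f @^-1` A `&` g @^-1` B).
  by apply: filterI; [exact: cf|exact: cg].
by exists (f y); split => //; rewrite fgy.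
Qed.

Lemma closed_ge_usc f (c : R) : upper_semicontinuous f ->
  closed [set x | c%:E <= f x].
Proof.
move=> uf; rewrite (_ : [set x | _] = ~` [set x | f x < c%:E]).
  apply: open_closedC; rewrite openE => x /uf [V nV VP].
  exact: filterS nV.
by apply/seteqP; split => x /=; rewrite leNgt => /negP.
Qed.

Lemma closed_le_lsc f (c : R) : lower_semicontinuous f ->
  closed [set x | f x <= c%:E].
Proof.
move=> /lower_semicontinuousP lf.
rewrite (_ : [set x | _] = ~` [set x | c%:E < f x]); first exact: open_closedC.
by apply/seteqP; split => x /=; rewrite leNgt => /negP.
Qed.

End ereal_continuity.

Section hahn_pairs.
Context {R : realType} {X : topologicalType}.
Local Open Scope ereal_scope.
Implicit Types (f g h : X -> \bar R) (u : nat -> X -> \bar R).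

Lemma stable_hahn_pair_countable g h :
  stable_hahn_pair g h -> countable_hahn_pair g h.
Proof.
case=> u [cu ugh]; exists u, u; do 2!split => //.
move=> x; have [[[n <-] gu] [[m <-] uh]] := ugh x; split; [|split] => //.
- apply/le_anti; rewrite ereal_inf_lbound ?andbT; last by exists n.
  by apply: le_ereal_inf_tmp => _ [k _ <-].
- apply/le_anti; rewrite ereal_sup_ubound; last by exists m.
  by rewrite ge_ereal_sup // => _ [k _ <-].
Qed.

Lemma countable_hahn_pair_hahn g h :
  countable_hahn_pair g h -> hahn_pair g h.
Proof.
case=> gn [hn [cg [ch ghn]]]; split; [|split].
- by move=> x; have [_ []] := ghn x.
- move=> x a; have [-> _] := ghn x; case/ereal_inf_lt => _ [n _ <-] gna.
  exists [set y | gn n y < a%:E]; first exact: nbhs_lt_continuous.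
  move=> y /= gy; have [-> _] := ghn y; apply: le_lt_trans gy.
  by apply: ereal_inf_lbound; exists n.
- move=> x a; have [_ [_ ->]] := ghn x; case/ereal_sup_gt => _ [n _ <-] gna.
  exists [set y | a%:E < hn n y]; first exact: nbhs_gt_continuous.
  move=> y /= gy; have [_ [_ ->]] := ghn y; apply: lt_le_trans gy _.
  by apply: ereal_sup_ubound; exists n.
Qed.

Lemma stably_converges_bigmine u g :
  (forall x, (exists n, u n x = g x) /\ (forall n, g x <= u n x)) ->
  stably_converges (fun n x => \big[mine/+oo]_(k < n) u k x) g.
Proof.
move=> ug x; have [[m <-] gu] := ug x; exists m.+1 => n mn.
apply/le_anti; rewrite le_bigmin ?leey // andbT.
exact: (bigmin_le _ (Ordinal mn) (fun k : 'I_n => u k x)).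
Qed.

Lemma stably_converges_bigmaxe u h :
  (forall x, (exists n, u n x = h x) /\ (forall n, u n x <= h x)) ->
  stably_converges (fun n x => \big[maxe/-oo]_(k < n) u k x) h.
Proof.
move=> uh x; have [[m <-] uh'] := uh x; exists m.+1 => n mn.
apply/le_anti; rewrite bigmax_le ?leNye //=.
exact: (le_bigmax _ (fun k : 'I_n => u k x) (Ordinal mn)).
Qed.

Lemma stable_hahn_pair_first_stable_baire g h : stable_hahn_pair g h ->
  first_stable_baire g /\ first_stable_baire h.
Proof.
case=> u [cu ugh]; split.
- exists (fun n x => \big[mine/+oo]_(k < n) u k x); split.
    by move=> n; exact: continuous_bigmine.
  by apply: stably_converges_bigmine => x; have [] := ugh x.
- exists (fun n x => \big[maxe/-oo]_(k < n) u k x); split.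
    by move=> n; exact: continuous_bigmaxe.
  by apply: stably_converges_bigmaxe => x; have [] := ugh x.
Qed.

Lemma stable_hahn_pair_interleave g h (U V : nat -> X -> \bar R) :
  (forall n, continuous (U n)) -> (forall n, continuous (V n)) ->
  (forall n x, g x <= U n x <= h x) -> (forall n x, g x <= V n x <= h x) ->
  (forall x, exists n, U n x = g x) -> (forall x, exists n, V n x = h x) ->
  stable_hahn_pair g h.
Proof.
move=> cU cV ghU ghV Ug Vh.
pose u n := if odd n then V n./2 else U n./2.
have between n x : g x <= u n x <= h x.
  by rewrite /u; case: ifP => _; [exact: ghV|exact: ghU].
exists u; split=> [n|x]; first by rewrite /u; case: ifP.
split; split=> [|n]; try by have /andP[] := between n x.
- by have [n Unx] := Ug x; exists n.*2; rewrite /u odd_double doubleK.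
- have [n Vnx] := Vh x; exists n.*2.+1.
  by rewrite /u /= odd_double /= uphalf_double.
Qed.

Lemma first_stable_baire_sigma_continuous f :
  first_stable_baire f -> sigma_continuous f.
Proof.
case=> fn [cf fnf].
pose Xn n := \bigcap_(k in [set k | (n <= k)%N]) [set x | fn k x = fn n x].
exists Xn; split; [|split].
- move=> n; apply: closed_bigI => k _; exact: closed_eq_continuous.
- apply/seteqP; split => // x _; have [n fnx] := fnf x; exists n => //.
  by move=> k nk /=; rewrite !fnx.
- move=> n; apply: (@subspace_eq_continuous _ _ _ (fn n)).
    move=> x; rewrite inE => Xnx; have [m fmx] := fnf x.
    rewrite -(Xnx (maxn n m)) /=; [exact: fmx (leq_maxr n m)|exact: leq_maxl].
  exact: continuous_subspaceT.
Qed.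

End hahn_pairs.

Section nested_limit.
Context {R : realType}.

Lemma ler_cvg0_addr (x y : R) (u : nat -> R) : u @ \oo --> 0 ->
  (forall n, x <= y + u n) -> x <= y.
Proof.
move=> u0 xyu; apply/ler_addgt0Pr => eps eps0.
have [N _ uN] := cvgr0_norm_lt _ u0 _ eps0.
apply: (le_trans (xyu N)); rewrite lerD2l.
exact: le_trans (ler_norm _) (ltW (uN N (leqnn N))).
Qed.

Lemma sup_nested_between (a b : nat -> R) : nondecreasing_seq a ->
  nonincreasing_seq b -> (forall n, a n <= b n) ->
  forall n, a n <= sup (range a) <= b n.
Proof.
move=> na nb ab n.
have a_le_b k : a k <= b n.
  apply: le_trans (na _ _ (leq_maxl k n)) _.
  exact: le_trans (ab _) (nb _ _ (leq_maxr k n)).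
have a0 : range a !=set0 by exists (a 0%N), 0%N.
apply/andP; split; last by apply: ge_sup => // _ [k _ <-].
by apply: sup_upper_bound; [split=> //; exists (b n) => _ [k _ <-]|exists n].
Qed.

Context {X : topologicalType}.

Lemma continuous_limit_nested (S : nat -> X -> R) (e : nat -> R) :
  (forall n, continuous (S n)) ->
  (forall n x, `|S n.+1 x - S n x| <= e n - e n.+1) -> e @ \oo --> 0 ->
  exists2 f, continuous f & forall n x, `|f x - S n x| <= e n.
Proof.
move=> cS dS e0; pose f x := sup (range (fun n => S n x - e n)).
have fS n x : `|f x - S n x| <= e n.
  have e_dec : nonincreasing_seq e.
    apply/nonincreasing_seqP => k; rewrite -subr_ge0.
    exact: le_trans (dS k x).
  have e_ge0 k : 0 <= e k.
    by rewrite -(cvg_lim _ e0) //; exact: nonincreasing_cvgn_ge (cvgP _ e0) _.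
  have dSx k : S k x - e k <= S k.+1 x - e k.+1 /\
               S k.+1 x + e k.+1 <= S k x + e k.
    by have := dS k x; rewrite ler_norml => /andP[]; split; lra.
  have nested k : S k x - e k <= f x <= S k x + e k.
    apply: (@sup_nested_between (fun n => S n x - e n) (fun n => S n x + e n))
      => [||{}k].
    - by apply/nondecreasing_seqP => {}k; have [] := dSx k.
    - by apply/nonincreasing_seqP => {}k; have [] := dSx k.
    - by have := e_ge0 k; lra.
  have /andP[] := nested n.
  by rewrite ler_norml => ? ?; apply/andP; split; lra.
exists f => // x; apply/cvgrPdist_lt => eps eps0.
have [N _ eN] := cvgr0_norm_lt _ e0 _ (divr_gt0 eps0 (ltr0n _ 3)).
have /ler_normlP[_ eNx] := ltW (eN N (leqnn N)).
have /cvgrPdist_lt/(_ (eps / 3) ltac:(lra)) := cS N x.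
apply: filterS => y /ltr_normlP[y1 y2].
have /ler_normlP[a1 a2] := fS N x; have /ler_normlP[b1 b2] := fS N y.
by rewrite ltr_norml; apply/andP; split; lra.
Qed.

End nested_limit.

Section real_insertion.
Context {R : realType} {X : topologicalType}.
Implicit Types (f g h S : X -> R).

Lemma upper_semicontinuousB f S : upper_semicontinuous (fun x => (f x)%:E) ->
  continuous S -> upper_semicontinuous (fun x => (f x - S x)%:E).
Proof.
move=> uf cS x a; rewrite lte_fin => fSa; pose e := (a - (f x - S x)) / 2.
have e0 : 0 < e by rewrite /e; lra.
have [V nV VP] := uf x (f x + e) ltac:(rewrite lte_fin; lra).
have /cvgrPdist_lt/(_ e e0) nS := cS x.
exists (V `&` [set y | `|S x - S y| < e]); first exact: filterI.
move=> y [/VP + /= /ltr_normlP[Sy1 Sy2]]; rewrite !lte_fin => fy.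
by rewrite /e in fy Sy1 Sy2 *; lra.
Qed.

Lemma lower_semicontinuousB f S : lower_semicontinuous (fun x => (f x)%:E) ->
  continuous S -> lower_semicontinuous (fun x => (f x - S x)%:E).
Proof.
move=> lf cS x a; rewrite lte_fin => fSa; pose e := ((f x - S x) - a) / 2.
have e0 : 0 < e by rewrite /e; lra.
have [V nV VP] := lf x (f x - e) ltac:(rewrite lte_fin; lra).
have /cvgrPdist_lt/(_ e e0) nS := cS x.
exists (V `&` [set y | `|S x - S y| < e]); first exact: filterI.
move=> y [/VP + /= /ltr_normlP[Sy1 Sy2]]; rewrite !lte_fin => fy.
by rewrite /e in fy Sy1 Sy2 *; lra.
Qed.

Lemma insertion_step g h (M : R) : normal_space X -> 0 < M ->
  upper_semicontinuous (fun x => (g x)%:E) ->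
  lower_semicontinuous (fun x => (h x)%:E) -> (forall x, g x <= h x) ->
  (forall x, g x <= M) -> (forall x, - M <= h x) ->
  exists phi : X -> R, [/\ continuous phi, (forall x, `|phi x| <= M / 3),
    (forall x, g x - phi x <= M * 2 / 3) &
    (forall x, - (M * 2 / 3) <= h x - phi x)].
Proof.
move=> nX M0 ug lh gh gM hM.
have cA : closed [set x | h x <= - (M / 3)].
  rewrite (_ : [set x | _] = [set x | ((h x)%:E <= (- (M / 3))%:E)%E]).
    exact: closed_le_lsc.
  by apply/seteqP; split => x /=; rewrite lee_fin.
have cB : closed [set x | M / 3 <= g x].
  rewrite (_ : [set x | _] = [set x | ((M / 3)%:E <= (g x)%:E)%E]).
    exact: closed_ge_usc.
  by apply/seteqP; split => x /=; rewrite lee_fin.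
have AB : [set x | h x <= - (M / 3)] `&` [set x | M / 3 <= g x] = set0.
  by apply/seteqP; split => // x [/= hx gx]; have := gh x; lra.
have M3 : - (M / 3) < M / 3 by lra.
have [phi [cphi phiA phiB phiM]] := urysohn_ext_itv nX cA cB AB M3.
have phi_itv x : - (M / 3) <= phi x <= M / 3.
  by have := phiM (phi x) (ex_intro2 _ _ x I erefl); rewrite /= in_itv.
exists phi; split => // x; first by rewrite ler_norml phi_itv.
- have /andP[? ?] := phi_itv x; have [gx|gx] := leP (M / 3) (g x); last lra.
  by rewrite (phiB (phi x)); [have := gM x; lra|exists x].
- have /andP[? ?] := phi_itv x; have [hx|hx] := leP (h x) (- (M / 3)); last lra.
  by rewrite (phiA (phi x)); [have := hM x; lra|exists x].
Qed.

Section katetov_tong_real.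
Variables (g h : X -> R).
Hypotheses (nX : normal_space X)
  (ug : upper_semicontinuous (fun x => (g x)%:E))
  (lh : lower_semicontinuous (fun x => (h x)%:E))
  (gh : forall x, g x <= h x)
  (g1 : forall x, g x <= 1) (h1 : forall x, -1 <= h x).

(* Each [insertion_step] shrinks the error bound by a factor 2/3. *)
Local Notation e n := ((2 / 3 : R) ^+ n).

Let approximant n S :=
  [/\ continuous S, forall x, g x - S x <= e n & forall x, - e n <= h x - S x].

Let approximant_step n S : approximant n S ->
  exists2 phi : X -> R,
    (forall x, `|phi x| <= e n / 3) & approximant n.+1 (S \+ phi).
Proof.
case=> cS gS hS; have en0 : 0 < e n by rewrite exprn_gt0 //; lra.
have [phi [cphi phiM gphi hphi]] := insertion_step nX en0
  (upper_semicontinuousB ug cS) (lower_semicontinuousB lh cS)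
  (fun x => lerB (gh x) (lexx _)) gS hS.
exists phi => //; split => [x|x|x]; first exact: cvgD (cS x) (cphi x).
- by have := gphi x; rewrite /= exprSr; lra.
- by have := hphi x; rewrite /= exprSr; lra.
Qed.

Let approximants : exists S : nat -> X -> R,
  forall n, approximant n (S n) /\ forall x, `|S n.+1 x - S n x| <= e n / 3.
Proof.
have step (p : nat * (X -> R)) : exists phi : X -> R, approximant p.1 p.2 ->
    (forall x, `|phi x| <= e p.1 / 3) /\ approximant p.1.+1 (p.2 \+ phi).
  have [/approximant_step[phi ? ?]|nS] := pselect (approximant p.1 p.2).
    by exists phi.
  by exists p.2.
(* [next] is specified only on approximants; elsewhere it is junk. *)
have [next Hnext] := choice step.
pose S := fix S n := if n is m.+1 then S m \+ next (m, S m) else fun=> 0 : R.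
have SS n : approximant n (S n).
  elim: n => [|n IH]; last by have [] := Hnext (n, S n) IH.
  by split => x /=; [exact: cst_continuous|rewrite subr0|rewrite subr0].
exists S => n; split => // x; have [+ _] := Hnext (n, S n) (SS n).
by rewrite /= addrC addKr.
Qed.

Lemma katetov_tong_real :
  exists2 f : X -> R, continuous f & forall x, g x <= f x <= h x.
Proof.
have [S SP] := approximants.
have e0 : e n @[n --> \oo] --> 0 by apply: cvg_expr; rewrite ger0_norm; lra.
have [|n x|f cf fS] := @continuous_limit_nested _ _ S (fun n => e n) _ _ e0.
- by move=> n; have [[]] := SP n.
- by have [_] := SP n; rewrite exprSr => /(_ x); lra.
have e20 : (fun n => e n + e n) @ \oo --> 0.
  by rewrite -[0 in X in _ --> X](addr0 0); exact: cvgD.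
exists f => // x; apply/andP; split; apply: (ler_cvg0_addr e20) => n.
- by have [[_ /(_ x) ? _] _] := SP n; have /ler_normlP[] := fS n x; lra.
- by have [[_ _ /(_ x) ?] _] := SP n; have /ler_normlP[] := fS n x; lra.
Qed.

End katetov_tong_real.

End real_insertion.

Section katetov_tong.
Context {R : realType} {X : topologicalType}.
Local Open Scope ereal_scope.
Implicit Types (f g h : X -> \bar R).

Lemma contract_itv (x : \bar R) : (-1 <= contract x <= 1)%R.
Proof. by rewrite -ler_norml contract_le1. Qed.

Lemma upper_semicontinuous_contract f : upper_semicontinuous f ->
  upper_semicontinuous (fun x => (contract (f x))%:E).
Proof.
move=> uf x a; rewrite lte_fin => fxa.
have [a1|a1] := ltP 1%R a.
  exists setT => [|y _]; first exact: filterT.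
  by rewrite lte_fin; have /andP[_ ?] := contract_itv (f y); lra.
pose b := ((contract (f x) + a) / 2)%R.
have /andP[? ?] := contract_itv (f x).
have b1 : (`|b| < 1)%R by rewrite ltr_norml /b; apply/andP; split; lra.
have [V nV VP] : exists2 V, nbhs x V &
    forall y, V y -> f y < (fine (expand b))%:E.
  by apply: uf; rewrite fine_expand // lt_expandRL ?inE ?ltW // /b; lra.
exists V => // y /VP.
by rewrite lte_fin fine_expand // lt_expandRL ?inE ?ltW // /b; lra.
Qed.

Lemma lower_semicontinuous_contract f : lower_semicontinuous f ->
  lower_semicontinuous (fun x => (contract (f x))%:E).
Proof.
move=> lf x a; rewrite lte_fin => fxa.
have [a1|a1] := ltP a (-1)%R.
  exists setT => [|y _]; first exact: filterT.
  by rewrite lte_fin; have /andP[? _] := contract_itv (f y); lra.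
pose b := ((contract (f x) + a) / 2)%R.
have /andP[? ?] := contract_itv (f x).
have b1 : (`|b| < 1)%R by rewrite ltr_norml /b; apply/andP; split; lra.
have [V nV VP] : exists2 V, nbhs x V &
    forall y, V y -> (fine (expand b))%:E < f y.
  by apply: lf; rewrite fine_expand // lt_expandLR ?inE ?ltW // /b; lra.
exists V => // y /VP.
by rewrite lte_fin fine_expand // lt_expandLR ?inE ?ltW // /b; lra.
Qed.

Lemma katetov_tong g h : normal_space X -> upper_semicontinuous g ->
  lower_semicontinuous h -> (forall x, g x <= h x) ->
  exists2 u, continuous u & forall x, g x <= u x <= h x.
Proof.
move=> nX ug lh gh.
have cgh x : (contract (g x) <= contract (h x))%R by rewrite le_contract.
have cg1 x : (contract (g x) <= 1)%R by have /andP[] := contract_itv (g x).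
have ch1 x : (-1 <= contract (h x))%R by have /andP[] := contract_itv (h x).
have [f cf gfh] := katetov_tong_real nX (upper_semicontinuous_contract ug)
  (lower_semicontinuous_contract lh) cgh cg1 ch1.
have f1 x : f x \in [pred r | `|r| <= 1]%R.
  have /andP[? ?] := gfh x; have /andP[? _] := contract_itv (g x).
  have /andP[_ ?] := contract_itv (h x).
  by rewrite inE ler_norml; apply/andP; split; lra.
exists (fun x => expand (f x)).
  move=> x; apply/cvg_ballP => e e0.
  have /cvgrPdist_lt/(_ e e0) := cf x; apply: filterS => y fy.
  by rewrite /ball /= /ereal_ball !expandK.
move=> x; have /andP[gf fh] := gfh x.
by rewrite -[g x]contractK -[h x]contractK !le_expand.
Qed.

End katetov_tong.

Section insertion_on_closed.
Context {R : realType} {X : topologicalType}.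
Local Open Scope ereal_scope.
Implicit Types (f g h k : X -> \bar R) (A : set X).

Lemma nbhs_lt_within k A x a : {within A, continuous k} -> A x -> k x < a ->
  \forall y \near x, A y -> k y < a.
Proof.
move=> ck Ax kxa; apply: ((subspace_continuousP _ _).1 ck x Ax [set e | e < a]).
by apply: open_nbhs_nbhs; split => //; exact: open_ereal_lt_ereal.
Qed.

Lemma nbhs_gt_within k A x a : {within A, continuous k} -> A x -> a < k x ->
  \forall y \near x, A y -> a < k y.
Proof.
move=> ck Ax kxa; apply: ((subspace_continuousP _ _).1 ck x Ax [set e | a < e]).
by apply: open_nbhs_nbhs; split => //; exact: open_ereal_gt_ereal.
Qed.

Definition patch A k f x := if `[< A x >] then k x else f x.

Lemma patch_usc A k f : closed A -> {within A, continuous k} ->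
  upper_semicontinuous f -> (forall x, A x -> f x <= k x) ->
  upper_semicontinuous (patch A k f).
Proof.
move=> cA ck uf fk x a; rewrite /patch; case: (asboolP (A x)) => Ax pxa.
  have [V nV VP] := uf x a (le_lt_trans (fk x Ax) pxa).
  exists (V `&` [set y | A y -> k y < a%:E]).
    by apply: filterI => //; exact: nbhs_lt_within.
  by move=> y [/VP fya /= kya]; case: asboolP => // /kya.
have [V nV VP] := uf x a pxa; exists (V `&` ~` A).
  apply: filterI => //; apply: open_nbhs_nbhs; split => //.
  exact: closed_openC.
by move=> y [/VP fya /= nAy]; case: asboolP.
Qed.

Lemma patch_lsc A k f : closed A -> {within A, continuous k} ->
  lower_semicontinuous f -> (forall x, A x -> k x <= f x) ->
  lower_semicontinuous (patch A k f).
Proof.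
move=> cA ck lf kf x a; rewrite /patch; case: (asboolP (A x)) => Ax pxa.
  have [V nV VP] := lf x a (lt_le_trans pxa (kf x Ax)).
  exists (V `&` [set y | A y -> a%:E < k y]).
    by apply: filterI => //; exact: nbhs_gt_within.
  by move=> y [/VP fya /= kya]; case: asboolP => // /kya.
have [V nV VP] := lf x a pxa; exists (V `&` ~` A).
  apply: filterI => //; apply: open_nbhs_nbhs; split => //.
  exact: closed_openC.
by move=> y [/VP fya /= nAy]; case: asboolP.
Qed.

Lemma insertion_on_closed g h A k : normal_space X -> hahn_pair g h ->
  closed A -> {within A, continuous k} ->
  (forall x, A x -> g x <= k x <= h x) ->
  exists u, [/\ continuous u, forall x, g x <= u x <= h x &
                              forall x, A x -> u x = k x].
Proof.
move=> nX [gh [ug lh]] cA ck gkh.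
have gk x : A x -> g x <= k x by case/gkh/andP.
have kh x : A x -> k x <= h x by case/gkh/andP.
have [|u cu ub] :=
  katetov_tong nX (patch_usc cA ck ug gk) (patch_lsc cA ck lh kh).
  by move=> x; rewrite /patch; case: asboolP => [/gkh//|_]; exact: gh.
exists u; split => // x.
  have /andP[] := ub x; rewrite /patch.
  case: asboolP => [/gkh/andP[gkx kxh]|_] gu uh.
    by rewrite (le_trans gkx gu) (le_trans uh kxh).
  by rewrite gu uh.
move=> Ax; have /andP[] := ub x; rewrite /patch; case: asboolP => // _ ku uk.
by apply/le_anti; rewrite ku uk.
Qed.

Lemma sigma_continuous_stable_hahn_pair g h : normal_space X ->
  hahn_pair g h -> sigma_continuous g -> sigma_continuous h ->
  stable_hahn_pair g h.
Proof.
move=> nX gh [Xn [cX [covX cgX]]] [Yn [cY [covY chY]]].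
have ggh x : g x <= g x <= h x by rewrite lexx gh.1.
have ghh x : g x <= h x <= h x by rewrite lexx gh.1.
have [U HU] := choice (fun n =>
  insertion_on_closed nX gh (cX n) (cgX n) (fun x _ => ggh x)).
have [V HV] := choice (fun n =>
  insertion_on_closed nX gh (cY n) (chY n) (fun x _ => ghh x)).
apply: (@stable_hahn_pair_interleave _ _ _ _ U V) => [n|n|n x|n x|x|x].
- by have [] := HU n.
- by have [] := HV n.
- by have [_ /(_ x)] := HU n.
- by have [_ /(_ x)] := HV n.
- have [n _ Xx] : (\bigcup_n Xn n) x by rewrite covX.
  by exists n; have [_ _ ->] := HU n.
- have [n _ Yx] : (\bigcup_n Yn n) x by rewrite covY.
  by exists n; have [_ _ ->] := HV n.
Qed.

End insertion_on_closed.

Lemma ptws_continuous {X : topologicalType} {I : Type} {V : topologicalType}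
    (f : X -> {ptws I -> V}) :
  (forall i, continuous (fun x => f x i)) -> continuous f.
Proof.
move=> cf x; apply/cvg_sup => i.
have : continuous (f : X -> initial_topology (fun g : I -> V => g i)).
  exact: continuous_comp_initial (cf i).
exact.
Qed.

Section family_topology.
Context {R : realType} {X : topologicalType} {I : countType}
  (F : I -> X -> \bar R).

Definition family_eval (x : X) : {ptws I -> \bar R} := fun i => F i x.
Local Notation XF := (initial_topology family_eval).

(* [{ptws I -> \bar R}] is a countable product of pseudometric spaces. *)
Lemma family_topology_normal : normal_space XF.
Proof. exact: pseudometric_normal. Qed.

Lemma family_topology_continuous i : continuous (F i : XF -> \bar R).
Proof.
move=> x; apply: (@continuous_comp _ _ _ (family_eval : XF -> _) (proj i)).
  exact: initial_continuous.
exact: proj_continuous.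
Qed.

Lemma continuous_from_family_topology (u : XF -> \bar R) :
  (forall i, continuous (F i)) -> continuous u -> continuous (u : X -> \bar R).
Proof.
move=> cF cu; have cid : continuous (id : X -> XF).
  by apply: continuous_comp_initial; exact: ptws_continuous.
by move=> x; apply: (@continuous_comp X XF _ id u); [exact: cid|exact: cu].
Qed.

End family_topology.

Lemma countable_first_stable_baire_stable_hahn_pair {R : realType}
    {X : topologicalType} (g h : X -> \bar R) :
  countable_hahn_pair g h -> first_stable_baire g -> first_stable_baire h ->
  stable_hahn_pair g h.
Proof.
move=> [gn [hn [cgn [chn ghn]]]] [gs [cgs gsg]] [hs [chs hsh]].
pose F (i : bool * bool * nat) := match i with
  | (false, false, n) => gn n | (false, true, n) => hn n
  | (true, false, n) => gs n | (true, true, n) => hs n end.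
have cF i : continuous (F i).
  by case: i => [[[] []] n]; [exact: chs|exact: cgs|exact: chn|exact: cgn].
pose XF := initial_topology (family_eval F).
have cFXF i : continuous (F i : XF -> \bar R).
  exact: family_topology_continuous.
have cp : @countable_hahn_pair XF R g h.
  exists gn, hn; split; [|split] => // n.
    exact: (cFXF (false, false, n)).
  exact: (cFXF (false, true, n)).
have bg : @first_stable_baire XF R g.
  by exists gs; split => // n; exact: (cFXF (true, false, n)).
have bh : @first_stable_baire XF R h.
  by exists hs; split => // n; exact: (cFXF (true, true, n)).
have nXF : normal_space XF by exact: family_topology_normal.
have [u [cu ugh]] := sigma_continuous_stable_hahn_pair nXF
  (countable_hahn_pair_hahn cp) (first_stable_baire_sigma_continuous bg)
  (first_stable_baire_sigma_continuous bh).
by exists u; split => // n; exact: continuous_from_family_topology (cu n).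
Qed.

Theorem proposition2p4 (R : realType) (X : topologicalType)
    (g h : X -> \bar R) :
  (stable_hahn_pair g h <->
     (countable_hahn_pair g h /\ first_stable_baire g /\ first_stable_baire h))
  /\
  (normal_space X ->
     (stable_hahn_pair g h <->
        (hahn_pair g h /\ first_stable_baire g /\ first_stable_baire h)) /\
     (stable_hahn_pair g h <->
        (hahn_pair g h /\ sigma_continuous g /\ sigma_continuous h))).
Proof.
have stable_hahn (s : stable_hahn_pair g h) :=
  countable_hahn_pair_hahn (stable_hahn_pair_countable s).
have stable_sigma (s : stable_hahn_pair g h) :
    sigma_continuous g /\ sigma_continuous h.
  have [bg bh] := stable_hahn_pair_first_stable_baire s.
  by split; exact: first_stable_baire_sigma_continuous.
split.
  split=> [s|[cp [bg bh]]].
    split; first exact: stable_hahn_pair_countable.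
    exact: stable_hahn_pair_first_stable_baire.
  exact: countable_first_stable_baire_stable_hahn_pair.
move=> nX; split; split.
- move=> s; split; first exact: stable_hahn.
  exact: stable_hahn_pair_first_stable_baire.
- case=> gh [bg bh]; apply: sigma_continuous_stable_hahn_pair => //;
    exact: first_stable_baire_sigma_continuous.
- by move=> s; split; [exact: stable_hahn|exact: stable_sigma].
- by case=> gh [sg sh]; exact: sigma_continuous_stable_hahn_pair.
Qed.
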